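(* Assume the setting below. Let $X'\in[\underline X,\overline X]$ be arbitrary, let $\bm w'=\arg\min_{\bm w\in\mathbb{R}^d}P_{X'}(\bm w)$, and let $\bm\alpha'$ be a maximizer of $D_{X'}$ over its feasible set $\mathcal{A}$. Define $$\Delta:=\max_{X''\in[\underline X,\overline X]}P_{X''}(\bm w')-\min_{X''\in[\underline X,\overline X]}D_{X''}(\bm\alpha'),$$ and $\mathcal{W}:=\{\bm w\in\mathbb{R}^d:\|\bm w-\bm w'\|_2\le\sqrt{2\Delta/\lambda}\}$. Then $\mathcal{W}\supseteq\mathcal{W}^*$, where $$\mathcal{W}^*:=\Bigl\{\arg\min_{\bm w\in\mathbb{R}^d}P_{X''}(\bm w)\ :\ X''\in[\underline X,\overline X]\Bigr\}.$$
   Context: Data: an output vector $\bm y=(y_1,\dots,y_n)\in\mathcal{Y}^n$ with $\mathcal{Y}\subseteq\mathbb{R}$, and two matrices $\underline X,\overline X\in\mathbb{R}^{n\times d}$ with $\underline X\le\overline X$ entrywise; $[\underline X,\overline X]$ denotes the set of all $X''\in\mathbb{R}^{n\times d}$ with $\underline{x_{ij}}\le x''_{ij}\le\overline{x_{ij}}$ for all $i,j$. For a matrix $X$, $\bm x_{i\cdot}$ denotes its $i$-th row and $\bm x_{\cdot j}$ its $j$-th column. Loss: $\ell:\mathcal{Y}\times\mathbb{R}\to\mathbb{R}_{\ge0}$, convex in its second argument. Penalty: $\rho:\mathbb{R}^d\to\mathbb{R}_{\ge 0}$, $\lambda$-strongly convex for some $\lambda>0$ (i.e. for all $\bm u,\bm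 v$ and $t\in[0,1]$, $\rho(t\bm u+(1-t)\bm v)\le t\rho(\bm u)+(1-t)\rho(\bm v)-\frac{\lambda}{2}t(1-t)\|\bm u-\bm v\|_2^2$) and decomposable, i.e. $\rho(\bm w)=\sum_{j=1}^d\rho_j(w_j)$ with each $\rho_j:\mathbb{R}\to\mathbb{R}$ convex. Primal objective: $P_X(\bm w):=\frac1n\sum_{i=1}^n\ell(y_i,\bm w^\top\bm x_{i\cdot})+\rho(\bm w)$. Convex conjugates: for $\phi:\mathbb{R}^k\to\mathbb{R}$, $\phi^*(\bm v):=\sup_{\bm u}\{\bm u^\top\bm v-\phi(\bm u)\}$; $\ell^*(y,\cdot)$ denotes the conjugate of $\ell(y,\cdot)$ in the second argument. Dual objective: $D_X(\bm\alpha):=-\frac1n\sum_{i=1}^n\ell^*(y_i,-\alpha_i)-\rho^*(\frac1n X^\top\bm\alpha)$, defined on the feasible set $\mathcal{A}:=\{\bm\alpha\in\mathbb{R}^n:\ell^*(y_i,-\alpha_i)<\infty\ \forall i\}$ (note $\rho^*$ is finite on all of $\mathbb{R}^d$ by strong convexity). Standing assumptions: the minimizers and maximizers referred to exist, and strong duality $\max_{\bm\alpha\in\mathcal{A}}D_X(\bm\alpha)=\min_{\bm w}P_X(\bm w)$ holds for every $X\in[\underline X,\overline X]$. *)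

From Stdlib Require Import Reals ClassicalEpsilon.
Open Scope R_scope.

(* Vectors in R^k are represented as functions nat -> R (only the first k
   coordinates matter); matrices in R^{n x d} as functions nat -> nat -> R. *)

Fixpoint rsum (k : nat) (f : nat -> R) : R :=
  match k with O => 0 | S m => rsum m f + f m end.

Definition dot (d : nat) (u v : nat -> R) : R := rsum d (fun j => u j * v j).
Definition norm2 (d : nat) (u : nat -> R) : R := sqrt (rsum d (fun j => u j ^ 2)).

(* least upper bound of a set of reals (meaningful when it exists) *)
Definition sup_R (S : R -> Prop) : R := epsilon (inhabits 0) (fun c => is_lub S c).

Definition conj1 (f : R -> R) (v : R) : R := sup_R (fun r => exists u, r = u * v - f u).
Definition conj1_finite (f : R -> R) (v : R) : Prop := bound (fun r => exists u, r = u * v - f u).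
Definition conjd (d : nat) (f : (nat -> R) -> R) (v : nat -> R) : R :=
  sup_R (fun r => exists u, r = dot d u v - f u).

Definition in_box (n d : nat) (Xlo Xhi X : nat -> nat -> R) : Prop :=
  forall i j, (i < n)%nat -> (j < d)%nat -> Xlo i j <= X i j <= Xhi i j.

Definition row (X : nat -> nat -> R) (i : nat) : nat -> R := fun j => X i j.

Definition Pobj (n d : nat) (l : R -> R -> R) (rho : (nat -> R) -> R)
  (y : nat -> R) (X : nat -> nat -> R) (w : nat -> R) : R :=
  / INR n * rsum n (fun i => l (y i) (dot d w (row X i))) + rho w.

Definition Dobj (n d : nat) (l : R -> R -> R) (rho : (nat -> R) -> R)
  (y : nat -> R) (X : nat -> nat -> R) (alpha : nat -> R) : R :=
  - (/ INR n * rsum n (fun i => conj1 (l (y i)) (- alpha i)))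
  - conjd d rho (fun j => / INR n * rsum n (fun i => X i j * alpha i)).

Definition feasible (n : nat) (l : R -> R -> R) (y : nat -> R) (alpha : nat -> R) : Prop :=
  forall i, (i < n)%nat -> conj1_finite (l (y i)) (- alpha i).

Definition convex1 (f : R -> R) : Prop :=
  forall u v t, 0 <= t <= 1 -> f (t * u + (1 - t) * v) <= t * f u + (1 - t) * f v.

Definition strongly_convex (d : nat) (lam : R) (rho : (nat -> R) -> R) : Prop :=
  forall u v t, 0 <= t <= 1 ->
    rho (fun j => t * u j + (1 - t) * v j)
    <= t * rho u + (1 - t) * rho v - lam / 2 * t * (1 - t) * (norm2 d (fun j => u j - v j)) ^ 2.

Definition is_minimizer (P : (nat -> R) -> R) (w : nat -> R) : Prop :=
  forall w2, P w <= P w2.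

Definition is_dual_maximizer (n : nat) (l : R -> R -> R) (y : nat -> R)
  (D : (nat -> R) -> R) (alpha : nat -> R) : Prop :=
  feasible n l y alpha /\ forall alpha2, feasible n l y alpha2 -> D alpha2 <= D alpha.

(* Every primal objective P_X is lambda-strongly convex, so its minimiser w_X
   satisfies the quadratic growth bound lambda/2 ||w' - w_X||^2 <= P_X(w') - P_X(w_X).
   By weak duality P_X(w_X) >= D_X(alpha'), hence the right-hand side is at most
   P_X(w') - D_X(alpha') <= max_X P_X(w') - min_X D_X(alpha'). *)

From Stdlib Require Import Reals Lra Psatz.
Open Scope R_scope.

Lemma rsum_ext k f g :
  (forall i, (i < k)%nat -> f i = g i) -> rsum k f = rsum k g.
Proof.
  induction k as [|k IH]; simpl; intros H; [reflexivity|].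
  rewrite IH by (intros; apply H; lia).
  rewrite H by lia; reflexivity.
Qed.

Lemma rsum_le k f g :
  (forall i, (i < k)%nat -> f i <= g i) -> rsum k f <= rsum k g.
Proof.
  induction k as [|k IH]; simpl; intros H; [lra|].
  assert (f k <= g k) by (apply H; lia).
  assert (rsum k f <= rsum k g) by (apply IH; intros; apply H; lia).
  lra.
Qed.

Lemma rsum_lin k a b f g :
  rsum k (fun i => a * f i + b * g i) = a * rsum k f + b * rsum k g.
Proof. induction k as [|k IH]; simpl; [ring | rewrite IH; ring]. Qed.

Lemma dot_lin_l d a b u v x :
  dot d (fun j => a * u j + b * v j) x = a * dot d u x + b * dot d v x.
Proof. unfold dot; rewrite <- rsum_lin; apply rsum_ext; intros; ring. Qed.

Lemma norm2_sub_sym d u v :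
  norm2 d (fun j => u j - v j) = norm2 d (fun j => v j - u j).
Proof. unfold norm2; f_equal; apply rsum_ext; intros; ring. Qed.

Lemma norm2_ge0 d u : 0 <= norm2 d u.
Proof. apply sqrt_pos. Qed.

Lemma Pobj_strongly_convex n d l rho y X lam :
  (forall i, (i < n)%nat -> convex1 (l (y i))) ->
  strongly_convex d lam rho ->
  strongly_convex d lam (Pobj n d l rho y X).
Proof.
  intros Hl Hrho u v t Ht; unfold Pobj.
  assert (Hinv : 0 <= / INR n).
  { destruct n; [simpl; rewrite Rinv_0; lra|].
    apply Rlt_le, Rinv_0_lt_compat, lt_0_INR; lia. }
  assert (Hloss :
    rsum n (fun i => l (y i) (dot d (fun j => t * u j + (1 - t) * v j) (row X i)))
    <= t * rsum n (fun i => l (y i) (dot d u (row X i)))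
       + (1 - t) * rsum n (fun i => l (y i) (dot d v (row X i)))).
  { rewrite <- rsum_lin; apply rsum_le; intros i Hi.
    rewrite dot_lin_l; apply Hl; assumption. }
  apply Rmult_le_compat_l with (r := / INR n) in Hloss; [|exact Hinv].
  specialize (Hrho u v t Ht).
  nra.
Qed.

(* The limit t -> 0 of the bound (1 - t) c <= a, done without limits. *)
Lemma le_of_forall_shrink a c :
  0 <= a -> (forall t, 0 < t <= 1 -> (1 - t) * c <= a) -> c <= a.
Proof.
  intros Ha H; destruct (Rle_dec c a) as [Hca|Hca]; [exact Hca|].
  apply Rnot_le_lt in Hca.
  assert (Hc : 0 < c) by lra.
  assert (Ht : 0 < (c - a) / (2 * c) <= 1).
  { split.
    - apply Rdiv_lt_0_compat; lra.
    - apply Rmult_le_reg_r with (2 * c); [lra|].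
      unfold Rdiv; rewrite Rmult_assoc, Rinv_l; lra. }
  specialize (H _ Ht).
  replace ((1 - (c - a) / (2 * c)) * c) with ((c + a) / 2) in H
    by (field; lra).
  lra.
Qed.

Lemma strongly_convex_quadratic_growth d lam f w u :
  strongly_convex d lam f -> is_minimizer f w ->
  lam / 2 * norm2 d (fun j => u j - w j) ^ 2 <= f u - f w.
Proof.
  intros Hf Hw.
  apply le_of_forall_shrink; [specialize (Hw u); lra|].
  intros t Ht.
  specialize (Hf u w t ltac:(lra)).
  specialize (Hw (fun j => t * u j + (1 - t) * w j)).
  apply Rmult_le_reg_l with t; [lra|].
  nra.
Qed.

Lemma weak_duality n l y (D P : (nat -> R) -> R) alpha w alpha2 w2 :
  is_dual_maximizer n l y D alpha -> is_minimizer P w -> D alpha = P w ->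
  feasible n l y alpha2 -> D alpha2 <= P w2.
Proof.
  intros [_ Hmax] Hmin Heq Hf.
  specialize (Hmax alpha2 Hf); specialize (Hmin w2); lra.
Qed.

Lemma le_sqrt_of_sq_le lam N G :
  0 < lam -> 0 <= N -> lam / 2 * N ^ 2 <= G -> N <= sqrt (2 * G / lam).
Proof.
  intros Hlam HN HG.
  rewrite <- (sqrt_pow2 N HN); apply sqrt_le_1_alt.
  apply Rmult_le_reg_l with (lam / 2); [lra|].
  replace (lam / 2 * (2 * G / lam)) with G by (field; lra).
  exact HG.
Qed.

Theorem theorem1
  (n d : nat) (Y : R -> Prop) (y : nat -> R) (Xlo Xhi : nat -> nat -> R)
  (l : R -> R -> R) (rho : (nat -> R) -> R) (rhoj : nat -> R -> R) (lam : R)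
  (Hy : forall i, (i < n)%nat -> Y (y i))
  (Hbox : forall i j, (i < n)%nat -> (j < d)%nat -> Xlo i j <= Xhi i j)
  (Hl_nonneg : forall a b, Y a -> 0 <= l a b)
  (Hl_convex : forall a, Y a -> convex1 (l a))
  (Hlam : 0 < lam)
  (Hrho_nonneg : forall w, 0 <= rho w)
  (Hrho_sc : strongly_convex d lam rho)
  (Hrho_dec : forall w, rho w = rsum d (fun j => rhoj j (w j)))
  (Hrhoj_convex : forall j, (j < d)%nat -> convex1 (rhoj j))
  (Hduality : forall X, in_box n d Xlo Xhi X ->
     exists alpha w,
       is_dual_maximizer n l y (Dobj n d l rho y X) alpha /\
       is_minimizer (Pobj n d l rho y X) w /\
       Dobj n d l rho y X alpha = Pobj n d l rho y X w)
  (X' : nat -> nat -> R) (HX' : in_box n d Xlo Xhi X')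
  (w' : nat -> R) (Hw' : is_minimizer (Pobj n d l rho y X') w')
  (alpha' : nat -> R) (Halpha' : is_dual_maximizer n l y (Dobj n d l rho y X') alpha')
  (Pmax Dmin : R)
  (HPmax : (exists X, in_box n d Xlo Xhi X /\ Pobj n d l rho y X w' = Pmax) /\
           forall X, in_box n d Xlo Xhi X -> Pobj n d l rho y X w' <= Pmax)
  (HDmin : (exists X, in_box n d Xlo Xhi X /\ Dobj n d l rho y X alpha' = Dmin) /\
           forall X, in_box n d Xlo Xhi X -> Dmin <= Dobj n d l rho y X alpha') :
  forall X'' w'', in_box n d Xlo Xhi X'' ->
    is_minimizer (Pobj n d l rho y X'') w'' ->
    norm2 d (fun j => w'' j - w' j) <= sqrt (2 * (Pmax - Dmin) / lam).
Proof.
  intros X'' w'' HX'' Hw''.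
  destruct (Hduality X'' HX'') as [alpha [w [Halpha [Hw Heq]]]].
  assert (Hdual : Dobj n d l rho y X'' alpha' <= Pobj n d l rho y X'' w'')
    by (eapply weak_duality; eauto; apply Halpha').
  assert (Hgrowth := strongly_convex_quadratic_growth d lam _ w'' w'
    (Pobj_strongly_convex n d l rho y X'' lam
       (fun i Hi => Hl_convex _ (Hy i Hi)) Hrho_sc) Hw'').
  assert (HP := proj2 HPmax X'' HX''); assert (HD := proj2 HDmin X'' HX'').
  rewrite norm2_sub_sym.
  apply le_sqrt_of_sq_le; [exact Hlam | apply norm2_ge0 | lra].
Qed.
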